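(* Let $G_k$ be the Hopf algebra described in the context, with reference mass $\mu>0$ and deformation parameter $k>0$. Let $m>0$, $m_f>0$, let $s$ be a spin with $D^s$ the corresponding spin-$s$ representation matrices of rotations, and for wave functions $\Phi_\sigma(\vec p)$ define $$\rho\,\Phi_\sigma(\vec p)=\left(I\otimes\zeta^{m/\mu}\right)\exp\!\Big(i\big(-\tfrac{\vec p^{\,2}}{2m_f}\otimes\tau+\vec p\otimes\vec a\big)\Big)\sum_{\sigma'}\left(I\otimes D^s_{\sigma\sigma'}(R)\right)\Phi_{\sigma'}\!\left(\vec p\otimes R^{-1}-m_f\,I\otimes\vec v\right).$$ Then $\rho$ is a (right) corepresentation of $G_k$, i.e. $(\rho\otimes I)\circ\rho=(I\otimes\Delta)\circ\rho$, if and only if $$m_f=\frac{\mu}{1-e^{-2\mu/k}}\left(1-e^{-2m/k}\right).$$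
   Context: $G_k$ is the Hopf $*$-algebra generated by self-adjoint elements $\tau$, $a^i$, $v^i$ ($i=1,2,3$), the entries ${R^i}_j$ of a rotation matrix $R$, and a unitary $\zeta$, with $\tau,a^i,v^i,{R^i}_j$ mutually commuting; $\tau\zeta=\zeta\tau$, ${R^i}_j\zeta=\zeta{R^i}_j$, $a^k\zeta=e^{-\mu/k}\zeta a^k$, $v^k\zeta=e^{-\mu/k}\zeta v^k$; coproducts $\Delta(v^i)={R^i}_j\otimes v^j+v^i\otimes I$, $\Delta(a^i)={R^i}_j\otimes a^j+v^i\otimes\tau+a^i\otimes I$, $\Delta(\tau)=\tau\otimes I+I\otimes\tau$, $\Delta({R^i}_j)={R^i}_l\otimes{R^l}_j$, $\Delta(\zeta)=(\zeta\otimes\zeta)\exp(-i\mu(\frac{\vec v^{\,2}}{2}\otimes\tau+v^k{R^k}_i\otimes a^i))$. Powers $\zeta^{s}$ for real $s$ are understood so that $a^k\zeta^s=e^{-s\mu/k}\zeta^sa^k$, $v^k\zeta^s=e^{-s\mu/k}\zeta^sv^k$, $\zeta^s$ commutes with $\tau$ and $R$, and $\zeta^s\zeta^t=\zeta^{s+t}$. In $\rho$, the first tensor factor carries the momentum variable $\vec p$ (commuting) and the second carries the group generators; $m_f$ is interpreted as the physical mass of the particle and $m$ as the eigenvalue of the mass generator $M$. *)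

From HB Require Import structures.
From mathcomp Require Import all_boot all_order all_algebra.
From mathcomp Require Import all_classical all_reals all_analysis.
From mathcomp Require Import complex.

Set Implicit Arguments.
Unset Strict Implicit.
Unset Printing Implicit Defensive.

Import Order.TTheory GRing.Theory Num.Theory.
Local Open Scope ring_scope.

Section Gk.
Variable R : realType.

Local Notation C := R[i].
Local Notation vec3 := 'cV[R]_3.
Local Notation mat3 := 'M[R]_3.

Definition is_rotation (M : mat3) : bool := (M^T *m M == 1%:M) && (\det M == 1).

Lemma is_rotation_mul (M N : mat3) :
  is_rotation M -> is_rotation N -> is_rotation (M *m N).
Proof.
move=> /andP[/eqP oM /eqP dM] /andP[/eqP oN /eqP dN]; apply/andP; split.
  by rewrite trmx_mul mulmxA -(mulmxA N^T) oM mulmx1 oN.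
by rewrite det_mulmx dM dN mulr1.
Qed.

Definition rotation := {M : mat3 | is_rotation M}.

(* ---------- points of the commutative part ----------
   A point x = (tau, a, v, R) is a joint spectral value of the mutually
   commuting self-adjoint generators tau, a^i, v^i and of the rotation
   matrix R.  Functions pt -> C are functions of these generators. *)
Record pt := Pt { tau : R; avec : vec3; vvec : vec3; rot : rotation }.

Definition dot (u w : vec3) : R := \sum_(i < 3) u i 0 * w i 0.

Definition cis (t : R) : C := Complex (cos t) (sin t).

(* ---------- concrete (faithful) realization of G_k (x) G_k ----------
   G_k (x) G_k acts on functions psi : pt * pt -> C:
   - a function f of the commuting generators (of both tensor slots)
     acts by multiplication;
   - zeta^s (x) zeta^t acts by  psi |-> psi (alpha_s x1, alpha_t x2),
     where alpha_s rescales a and v by e^{s mu / k}.  This realizes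
     a^j zeta^s = e^{-s mu/k} zeta^s a^j, v^j zeta^s = e^{-s mu/k} zeta^s v^j,
     zeta^s commuting with tau and R, zeta^s zeta^t = zeta^(s+t). *)
Definition op2 := (pt * pt -> C) -> (pt * pt -> C).

Definition alpha (mu k s : R) (x : pt) : pt :=
  Pt (tau x) (expR (s * mu / k) *: avec x) (expR (s * mu / k) *: vvec x) (rot x).

Definition zeta2 (mu k s t : R) : op2 :=
  fun psi y => psi (alpha mu k s y.1, alpha mu k t y.2).

Definition mult2 (F : pt * pt -> C) : op2 := fun psi y => F y * psi y.

(* An element of G_k of the normal form  zeta^s * f(tau, a, v, R). *)
Record gel := Gel { zpow : R; coef : pt -> C }.

(* Delta on the commutative generators:
   Delta tau = tau (x) I + I (x) tau,
   Delta v^i = R^i_j (x) v^j + v^i (x) I,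
   Delta a^i = R^i_j (x) a^j + v^i (x) tau + a^i (x) I,
   Delta R^i_j = R^i_l (x) R^l_j. *)
Definition delta_pt (y : pt * pt) : pt :=
  let: (x1, x2) := y in
  Pt (tau x1 + tau x2)
     (val (rot x1) *m avec x2 + tau x2 *: vvec x1 + avec x1)
     (val (rot x1) *m vvec x2 + vvec x1)
     (exist _ (val (rot x1) *m val (rot x2))
        (is_rotation_mul (valP (rot x1)) (valP (rot x2)))).

(* the exponent  v^2/2 (x) tau + v^k R^k_i (x) a^i  of Delta(zeta) *)
Definition Xzeta (y : pt * pt) : R :=
  dot (vvec y.1) (vvec y.1) / 2 * tau y.2
  + \sum_(kk < 3) \sum_(ii < 3) vvec y.1 kk 0 * val (rot y.1) kk ii * avec y.2 ii 0.

(* Delta(zeta^s) = (zeta^s (x) zeta^s) exp(-i mu c(s) X).  For s = 1 this is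
   the given Delta(zeta); c is the unique continuous solution of
   c(s+t) = e^{-2 t mu/k} c(s) + c(t), c(1) = 1, i.e. the one making
   s |-> Delta(zeta^s) a one-parameter group (Delta(zeta^s)Delta(zeta^t)
   = Delta(zeta^(s+t))) extending Delta(zeta). *)
Definition cpow (mu k s : R) : R :=
  (1 - expR (- (2 * s * mu / k))) / (1 - expR (- (2 * mu / k))).

Definition Delta_zeta (mu k s : R) : op2 :=
  zeta2 mu k s s \o mult2 (fun y => cis (- (mu * cpow mu k s * Xzeta y))).

Definition Delta (mu k : R) (g : gel) : op2 :=
  Delta_zeta mu k (zpow g) \o mult2 (fun y => coef g (delta_pt y)).

Definition phase (mf : R) (p : vec3) (x : pt) : R :=
  - (dot p p / (2 * mf)) * tau x + dot p (avec x).

Definition boost (mf : R) (p : vec3) (x : pt) : vec3 :=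
  invmx (val (rot x)) *m (p - mf *: vvec x).

Definition rho (mu k m mf : R) (N : nat) (D : mat3 -> 'M[C]_N)
  (Phi : vec3 -> 'I_N -> C) : vec3 -> 'I_N -> gel :=
  fun p sigma =>
    Gel (m / mu)
        (fun x => cis (phase mf p x) *
           \sum_(sigma' < N) D (val (rot x)) sigma sigma' * Phi (boost mf p x) sigma').

(* (rho (x) I) applied to an element of V (x) G_k of the form
   (I (x) zeta^s3) Psi(p; x2):  rho acts on the momentum variable slice-wise,
   its group factor goes to the first slot of G_k (x) G_k, the old one to
   the second slot. *)
Definition rho_I (mu k m mf : R) (N : nat) (D : mat3 -> 'M[C]_N)
  (s3 : R) (Psi : vec3 -> 'I_N -> pt -> C) : vec3 -> 'I_N -> op2 :=
  fun p sigma =>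
    zeta2 mu k (m / mu) s3 \o
    mult2 (fun y => coef (rho mu k m mf D (fun q tau' => Psi q tau' y.2) p sigma) y.1).

Definition rho_rho (mu k m mf : R) (N : nat) (D : mat3 -> 'M[C]_N)
  (Phi : vec3 -> 'I_N -> C) : vec3 -> 'I_N -> op2 :=
  rho_I mu k m mf D (m / mu) (fun p sigma => coef (rho mu k m mf D Phi p sigma)).

Definition I_Delta_rho (mu k m mf : R) (N : nat) (D : mat3 -> 'M[C]_N)
  (Phi : vec3 -> 'I_N -> C) : vec3 -> 'I_N -> op2 :=
  fun p sigma => Delta mu k (rho mu k m mf D Phi p sigma).

Definition is_corep (mu k m mf : R) (N : nat) (D : mat3 -> 'M[C]_N) : Prop :=
  forall Phi : vec3 -> 'I_N -> C,
    rho_rho mu k m mf D Phi = I_Delta_rho mu k m mf D Phi.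

Definition is_rot_rep (N : nat) (D : mat3 -> 'M[C]_N) : Prop :=
  D 1%:M = 1%:M /\
  forall M1 M2 : mat3, is_rotation M1 -> is_rotation M2 ->
    D (M1 *m M2) = D M1 *m D M2.

End Gk.

From Pilot Require Import Defs.
From HB Require Import structures.
From mathcomp Require Import all_boot all_order all_algebra.
From mathcomp Require Import all_classical all_reals all_analysis.
From mathcomp Require Import complex.
From mathcomp Require Import ring lra.
Import Order.TTheory GRing.Theory Num.Theory.
Local Open Scope ring_scope.

(* Both sides of the corepresentation identity are the same function of the
   generators, namely the group factor zeta^(m/mu) times the wave function
   evaluated at the coproduct of the generators, up to a phase: composing the
   two Galilean boosts of rho produces exp(-i m_f X), whereas Delta(zeta^(m/mu))
   contributes exp(-i mu c(m/mu) X), X being the exponent v^2/2 (x) tau +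
   v^k R^k_i (x) a^i of Delta(zeta).  Since X takes every real value, the two
   sides agree exactly when m_f = mu c(m/mu), which is the stated formula. *)

Section Corep.
Variable R : realType.
Local Notation vec3 := 'cV[R]_3.

Lemma cisD (a b : R) : cis a * cis b = cis (a + b).
Proof.
rewrite /cis cosD sinD; apply/eqP; rewrite eq_complex /=.
by apply/andP; split; apply/eqP; ring.
Qed.

Lemma cis0 : cis (0 : R) = 1.
Proof. by rewrite /cis cos0 sin0. Qed.

Lemma cis_neq0 (a : R) : cis a != 0.
Proof.
apply/eqP => ca0; have := cisD a (- a).
by rewrite ca0 mul0r subrr cis0 => /eqP; rewrite eq_sym oner_eq0.
Qed.

Lemma cis_eq1_scale (a : R) : (forall t, cis (a * t) = 1) -> a = 0.
Proof.
move=> ca1; apply/eqP; apply: contraT => a0.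
have := ca1 (pi / 2 / a); rewrite mulrC divfK //.
by move/(congr1 (@complex.Re R)); rewrite /= cos_pihalf => /eqP; rewrite eq_sym oner_eq0.
Qed.

Lemma dotE (u w : vec3) : dot u w = (u^T *m w) 0 0.
Proof. by rewrite /dot mxE; apply: eq_bigr => i _; rewrite mxE. Qed.

Lemma dotC (u w : vec3) : dot u w = dot w u.
Proof. by apply: eq_bigr => i _; rewrite mulrC. Qed.

Lemma dot_mulmxl (M : 'M[R]_3) (u w : vec3) : dot (M *m u) w = dot u (M^T *m w).
Proof. by rewrite !dotE trmx_mul mulmxA. Qed.

Lemma dot0l (w : vec3) : dot 0 w = 0.
Proof. by rewrite /dot big1 // => i _; rewrite mxE mul0r. Qed.

Lemma dotDl (u v w : vec3) : dot (u + v) w = dot u w + dot v w.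
Proof. by rewrite /dot -big_split; apply: eq_bigr => i _; rewrite !mxE mulrDl. Qed.

Lemma dotNl (u w : vec3) : dot (- u) w = - dot u w.
Proof. by rewrite /dot -sumrN; apply: eq_bigr => i _; rewrite !mxE mulNr. Qed.

Lemma dotZl (c : R) (u w : vec3) : dot (c *: u) w = c * dot u w.
Proof. by rewrite /dot mulr_sumr; apply: eq_bigr => i _; rewrite !mxE mulrA. Qed.

Lemma dotDr (u v w : vec3) : dot w (u + v) = dot w u + dot w v.
Proof. by rewrite !(dotC w) dotDl. Qed.

Lemma dotNr (u w : vec3) : dot w (- u) = - dot w u.
Proof. by rewrite !(dotC w) dotNl. Qed.

Lemma dotZr (c : R) (u w : vec3) : dot w (c *: u) = c * dot w u.
Proof. by rewrite !(dotC w) dotZl. Qed.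

Lemma rotation_trmxK (r : rotation R) : (val r)^T *m val r = 1%:M.
Proof. by case: r => M /= /andP[/eqP]. Qed.

Lemma rotation_mulmxT (r : rotation R) : val r *m (val r)^T = 1%:M.
Proof. exact/mulmx1C/rotation_trmxK. Qed.

Lemma rotation_invmx (r : rotation R) : invmx (val r) = (val r)^T.
Proof.
have r_unit : val r \in unitmx.
  by case: r => M /= /andP[_ /eqP detM]; rewrite unitmxE detM unitr1.
by rewrite -[RHS]mul1mx -(mulVmx r_unit) -mulmxA rotation_mulmxT mulmx1.
Qed.

Lemma dot_rotation (r : rotation R) (u w : vec3) :
  dot ((val r)^T *m u) ((val r)^T *m w) = dot u w.
Proof. by rewrite dot_mulmxl trmxK mulmxA rotation_mulmxT mul1mx. Qed.

Lemma XzetaE (y : pt R * pt R) : Xzeta y =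
  dot (vvec y.1) (vvec y.1) / 2 * tau y.2
  + dot (vvec y.1) (val (Defs.rot y.1) *m avec y.2).
Proof.
rewrite /Xzeta; congr (_ + _); apply: eq_bigr => i _.
by rewrite mxE mulr_sumr; apply: eq_bigr => j _; rewrite mulrA.
Qed.

Lemma Xzeta_alpha_surj (mu k s t : R) :
  exists y, let w := (alpha mu k s y.1, alpha mu k s y.2) in
    Xzeta w = t /\ val (Defs.rot (delta_pt w)) = 1%:M.
Proof.
have r1P : is_rotation (1%:M : 'M[R]_3) by rewrite /is_rotation trmx1 mulmx1 det1 !eqxx.
pose r := exist _ 1%:M r1P : rotation R.
pose E := expR (s * mu / k); pose v : vec3 := const_mx 1.
have K0 : dot (E *: v) (E *: v) / 2 != 0.
  rewrite dotZl dotZr /dot !big_ord_recr big_ord0 /= !mxE.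
  by rewrite !mulf_neq0 ?gt_eqF ?expR_gt0 //; lra.
exists (Pt 0 0 v r, Pt (t / (dot (E *: v) (E *: v) / 2)) 0 0 r).
by split; rewrite /= ?mulmx1 // XzetaE /= scaler0 mulmx0 dotC dot0l addr0 mulrC divfK.
Qed.

Lemma mu_cpow (mu k m : R) : mu != 0 ->
  mu / (1 - expR (- (2 * mu / k))) * (1 - expR (- (2 * m / k))) = mu * cpow mu k (m / mu).
Proof.
move=> mu0; rewrite /cpow mulrAC -mulrA; congr (_ * ((1 - expR (- (_ / k))) / _)).
by field.
Qed.

Variables (mf : R) (N : nat) (D : 'M[R]_3 -> 'M[R[i]]_N).
Hypothesis mf0 : mf != 0.
Hypothesis DM : forall M1 M2 : 'M[R]_3, is_rotation M1 -> is_rotation M2 ->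
  D (M1 *m M2) = D M1 *m D M2.

Lemma boost_delta (p : vec3) (x1 x2 : pt R) :
  boost mf (boost mf p x1) x2 = boost mf p (delta_pt (x1, x2)).
Proof.
rewrite /boost !rotation_invmx /= trmx_mul -mulmxA; congr (_ *m _).
rewrite !mulmxBr scalerDr mulmxDr -!scalemxAr mulmxA rotation_trmxK mul1mx.
by rewrite opprD addrA addrAC.
Qed.

Lemma phase_delta (p : vec3) (x1 x2 : pt R) :
  phase mf p x1 + phase mf (boost mf p x1) x2
  = - (mf * Xzeta (x1, x2)) + phase mf p (delta_pt (x1, x2)).
Proof.
rewrite XzetaE /phase /boost rotation_invmx /= dot_rotation dot_mulmxl trmxK.
rewrite !(dotDl, dotDr, dotNl, dotNr, dotZl, dotZr) (dotC (vvec x1) p).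
set P := dot p p; set V := dot (vvec x1) (vvec x1); set PV := dot p (vvec x1).
set PA := dot p (avec x1); set PRA := dot p (_ *m avec x2).
set VRA := dot (vvec x1) (_ *m avec x2).
by field.
Qed.

Variables (mu k m : R) (Phi : vec3 -> 'I_N -> R[i]).

Lemma coef_rho_rho (p : vec3) (sigma : 'I_N) (w : pt R * pt R) :
  coef (rho mu k m mf D (fun q t => coef (rho mu k m mf D Phi q t) w.2) p sigma) w.1
  = cis (- (mf * Xzeta w)) * coef (rho mu k m mf D Phi p sigma) (delta_pt w).
Proof.
case: w => x1 x2 /=.
rewrite boost_delta DM; [|exact: valP|exact: valP].
under eq_bigr do rewrite mulrCA.
rewrite -mulr_sumr mulrA cisD phase_delta -cisD -!mulrA; congr (_ * (_ * _)).
apply: etrans; first by apply: eq_bigr => i _; exact: mulr_sumr.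
rewrite exchange_big /=; apply: eq_bigr => j _.
by rewrite mxE mulr_suml; apply: eq_bigr => i _; rewrite mulrA.
Qed.

Lemma rho_rhoE p sigma psi y :
  let w := (alpha mu k (m / mu) y.1, alpha mu k (m / mu) y.2) in
  rho_rho mu k m mf D Phi p sigma psi y =
    cis (- (mf * Xzeta w)) * (coef (rho mu k m mf D Phi p sigma) (delta_pt w) * psi w).
Proof. by move=> w; rewrite mulrA -coef_rho_rho. Qed.

Lemma I_Delta_rhoE p sigma psi y :
  let w := (alpha mu k (m / mu) y.1, alpha mu k (m / mu) y.2) in
  I_Delta_rho mu k m mf D Phi p sigma psi y =
    cis (- (mu * cpow mu k (m / mu) * Xzeta w)) *
      (coef (rho mu k m mf D Phi p sigma) (delta_pt w) * psi w).
Proof. by []. Qed.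

End Corep.

Lemma coef_rho_neq0 {R : realType} (mu k m mf : R) {N : nat}
    {D : 'M[R]_3 -> 'M[R[i]]_N.+1} (p : 'cV[R]_3) {x : pt R} : D 1%:M = 1%:M ->
  val (Defs.rot x) = 1%:M ->
  coef (rho mu k m mf D (fun _ j => (j == ord0)%:R) p ord0) x != 0.
Proof.
move=> D1 rot1; rewrite /= rot1 D1 mulf_neq0 ?cis_neq0 // (bigD1 ord0) //= big1.
  by rewrite mxE eqxx mulr1 addr0 oner_eq0.
by move=> j j0; rewrite (negbTE j0) mulr0.
Qed.

Lemma is_corepP (R : realType) (mu k m mf : R) (N : nat)
    (D : 'M[R]_3 -> 'M[R[i]]_N.+1) :
  mf != 0 -> D 1%:M = 1%:M ->
  (forall M1 M2 : 'M[R]_3, is_rotation M1 -> is_rotation M2 ->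
    D (M1 *m M2) = D M1 *m D M2) ->
  is_corep mu k m mf D <-> mf = mu * cpow mu k (m / mu).
Proof.
move=> mf0 D1 DM; split=> [corep | mf_eq]; last first.
  move=> Phi; apply: funext => p; apply: funext => sigma.
  apply: funext => psi; apply: funext => y.
  by rewrite rho_rhoE // I_Delta_rhoE mf_eq.
apply/eqP; rewrite -subr_eq0; apply/eqP/cis_eq1_scale => t.
have [y [Xt rot1]] := Xzeta_alpha_surj _ mu k (m / mu) t.
pose Phi : 'cV[R]_3 -> 'I_N.+1 -> R[i] := fun _ j => (j == ord0)%:R.
have := congr1 (fun f => f 0 ord0 (fun _ => 1) y) (corep Phi).
rewrite /= rho_rhoE // I_Delta_rhoE Xt !mulr1.
move/(mulIf (coef_rho_neq0 mu k m mf 0 D1 rot1)) => phases.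
by rewrite mulrBl -cisD -phases cisD subrr cis0.
Qed.

Theorem mainTheorem3 (R : realType) (mu k m mf : R) (twos : nat)
  (D : 'M[R]_3 -> 'M[R[i]]_twos.+1) :
  0 < mu -> 0 < k -> 0 < m -> 0 < mf -> is_rot_rep D ->
  (is_corep mu k m mf D <->
   mf = mu / (1 - expR (- (2 * mu / k))) * (1 - expR (- (2 * m / k)))).
Proof.
move=> mu0 _ _ mf0 [D1 DM].
by rewrite mu_cpow ?gt_eqF //; apply: is_corepP; rewrite ?gt_eqF.
Qed.
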